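(* Let $n\ge0$ and let $w,u\in S_n$ be such that $\operatorname{Des}(u)\subseteq\operatorname{LRM}'(w)$. Then $uw\le_{\mathrm{lex}}w$.
   Context: $S_n$ is the symmetric group on $[n]=\{1,\dots,n\}$, with product $(uw)(i)=u(w(i))$. $\operatorname{Des}(u)=\{i\in[n-1]:u(i)>u(i+1)\}$. The set of left-to-right minima of $w\in S_n$ is $\operatorname{LRM}(w)=\{i\in[n]: w(k)>i \text{ for all } k<w^{-1}(i)\}$ (the entries smaller than all entries to their left in the one-line notation $w(1)w(2)\cdots w(n)$), and $\operatorname{LRM}'(w)=\{\ell-1:\ell\in\operatorname{LRM}(w),\ \ell>1\}\subseteq[n-1]$. The relation $\le_{\mathrm{lex}}$ compares permutations by lexicographic comparison of their one-line notations $(\sigma(1),\dots,\sigma(n))$. *)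

(* Permutations of [n] are 'S_n = {perm 'I_n}; the value
   i : 'I_n (0-based) stands for i+1 in [n]. All notions below are stated
   with the paper's 1-based conventions via the one-line notation. *)
From mathcomp Require Import all_boot all_order all_fingroup.
Set Implicit Arguments. Unset Strict Implicit. Unset Printing Implicit Defensive.
Import Order.TTheory.

Definition oneline n (s : 'S_n) : seq nat := [seq (s i).+1 | i <- enum 'I_n].

Definition val1 n (s : 'S_n) (i : nat) : nat := nth 0 (oneline s) i.-1.

Definition pos1 n (s : 'S_n) (l : nat) : nat := (index l (oneline s)).+1.

(* Product with (uw)(i) = u(w(i)); in MathComp (w * u)%g x = u (w x). *)
Definition pmul n (u w : 'S_n) : 'S_n := (w * u)%g.

Definition Des n (u : 'S_n) : pred nat :=
  [pred i | (1 <= i <= n.-1) && (val1 u i.+1 < val1 u i)].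

Definition LRM n (w : 'S_n) : pred nat :=
  [pred i | (1 <= i <= n) && all (fun k => i < val1 w k) (iota 1 (pos1 w i).-1)].

Definition LRM' n (w : 'S_n) : pred nat :=
  [pred j | (1 <= j) && LRM w j.+1].

Definition lex_le n (s t : 'S_n) : bool :=
  ((oneline s : seqlexi nat) <= (oneline t : seqlexi nat))%O.

From Pilot Require Import Defs.
From mathcomp Require Import all_boot all_order all_fingroup.
From mathcomp Require Import zify.
Import Order.TTheory.

Set Implicit Arguments.
Unset Strict Implicit.
Unset Printing Implicit Defensive.

(* Let i be the first position at which uw and w differ, and a = w(i); we show
   u(a) < a.  Otherwise u(a) > a, and then u(c) > a for every c >= a, by
   induction on c: a value c > a either occurs before position i in w, so u
   fixes it, or after it, and then u has no descent between c - 1 and c, since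
   such a descent would make c a left-to-right minimum of w although the
   smaller value a occurs before it.  But a permutation cannot map
   {c | c >= a} into the smaller set {c | c > a}. *)

Lemma lexi_first_diff d (T : orderType d) (x0 : T) (s t : seq T) :
  size s = size t ->
  (forall i, i < size s -> (forall k, k < i -> nth x0 s k = nth x0 t k) ->
     nth x0 s i != nth x0 t i -> (nth x0 s i < nth x0 t i)%O) ->
  (s <= t :> seqlexi T)%O.
Proof.
elim: s t => [|x s IHs] [|y t] //= [size_st].
have [<-|neq_xy] := eqVneq x y => first_diff; last first.
  by rewrite neqhead_lexiE //; apply: (first_diff 0).
rewrite lexi_cons lexx /=; apply: IHs => // i lt_is agree.
by apply: (first_diff i.+1) => // -[|k] //= lt_ki; apply: agree.
Qed.

Lemma perm_ge_to_le n (u : 'S_n) (a : 'I_n) : exists2 c : 'I_n, a <= c & u c <= a.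
Proof.
have [/existsP[c /andP[]]|/existsPn up] :=
  boolP [exists c : 'I_n, (a <= c) && (u c <= a)]; first by exists c.
pose A := [set c : 'I_n | a <= c]; pose B := [set c : 'I_n | a < c].
have sub_uA_B : u @: A \subset B.
  apply/subsetP => x /imsetP[c]; rewrite !inE => le_ac ->.
  by move: (up c); rewrite le_ac ltnNge.
have proper_BA : B \proper A.
  apply/properP; split; first by apply/subsetP => c; rewrite !inE; apply: ltnW.
  by exists a; rewrite !inE ?leqnn ?ltnn.
have := subset_leq_card sub_uA_B; rewrite card_imset; last exact: perm_inj.
by rewrite leqNgt proper_card.
Qed.

Definition ltr_min n (w : 'S_n) (c : 'I_n) : Prop :=
  forall p : 'I_n, p < (w^-1)%g c -> c < w p.

Section FirstMovedValue.

Variables (n : nat) (w u : 'S_n).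

Hypothesis descent_ltr_min :
  forall c c' : 'I_n, c' = c.+1 :> nat -> u c' < u c -> ltr_min w c'.

Variable i : 'I_n.

Hypothesis fixed_before : forall k : 'I_n, k < i -> u (w k) = w k.

Lemma up_from_first_moved :
  w i < u (w i) -> forall c : 'I_n, w i <= c -> w i < u c.
Proof.
move=> up_wi c le_wi_c.
suff up_at m (c' : 'I_n) : nat_of_ord c' = w i + m -> w i < u c'.
  by apply: (up_at (c - w i)); lia.
elim: m c' => [|m IHm] c' c'E.
  by have -> : c' = w i by apply: val_inj; rewrite /= c'E addn0.
have [before|after] := ltnP ((w^-1)%g c') i.
  by have := fixed_before before; rewrite permKV => ->; lia.
have lt_pred : w i + m < n by have := ltn_ord c'; lia.
have := IHm (Ordinal lt_pred) erefl.
have [no_descent|descent] := leqP (u (Ordinal lt_pred)) (u c'); last first.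
  have lt_i : i < (w^-1)%g c'.
    rewrite ltn_neqAle after andbT; apply/eqP => /val_inj eq_i.
    by move: c'E; rewrite eq_i permKV; lia.
  have c'S : nat_of_ord c' = (Ordinal lt_pred).+1 by rewrite c'E addnS.
  by have := descent_ltr_min c'S descent lt_i; lia.
suff : u (Ordinal lt_pred) != u c' by lia.
by rewrite (inj_eq perm_inj) -val_eqE /= c'E; lia.
Qed.

Lemma first_moved_decreases : u (w i) != w i -> u (w i) < w i.
Proof.
move=> moved; rewrite ltnNge; apply/negP => le_wi.
have up_wi : w i < u (w i) by rewrite ltn_neqAle le_wi andbT eq_sym val_eqE.
have [c le_wi_c] := perm_ge_to_le u (w i).
by rewrite leqNgt up_from_first_moved.
Qed.

End FirstMovedValue.

Lemma size_oneline n (s : 'S_n) : size (oneline s) = n.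
Proof. by rewrite size_map size_enum_ord. Qed.

Lemma nth_oneline n (s : 'S_n) (i : 'I_n) : nth 0 (oneline s) i = (s i).+1.
Proof. by rewrite (nth_map i) ?size_enum_ord // nth_ord_enum. Qed.

Lemma index_oneline n (s : 'S_n) (c : 'I_n) :
  index c.+1 (oneline s) = (s^-1)%g c.
Proof.
rewrite -{1}(permKV s c) (index_map (f := fun i => (s i).+1)) ?index_enum_ord //.
by move=> i j [/val_inj/perm_inj].
Qed.

Lemma mem_Des_ord n (u : 'S_n) (c c' : 'I_n) :
  c' = c.+1 :> nat -> (c.+1 \in Des u) = (u c' < u c).
Proof.
move=> c'E; rewrite inE /= /Defs.val1 /= -c'E !nth_oneline ltnS.
by have -> : c' <= n.-1 by have := ltn_ord c'; lia.
Qed.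

Lemma LRM_ltr_min n (w : 'S_n) (c : 'I_n) : c.+1 \in LRM w -> ltr_min w c.
Proof.
rewrite inE /= /Defs.pos1 index_oneline => /andP[_ /allP ltr_c] p lt_p.
have := ltr_c p.+1; rewrite mem_iota /Defs.val1 /= nth_oneline ltnS.
by apply; lia.
Qed.

Theorem lemma3p4 (n : nat) (w u : 'S_n) :
  {subset Des u <= LRM' w} -> lex_le (pmul u w) w.
Proof.
move=> Des_sub; apply: (@lexi_first_diff _ _ 0) => [|i].
  by rewrite !size_oneline.
rewrite size_oneline => lt_in.
have -> : i = Ordinal lt_in by [].
rewrite !nth_oneline /pmul permM eqSS ltEnat /= ltnS => agree.
apply: first_moved_decreases => [c c' c'E descent|k lt_ki].
  have /Des_sub : c.+1 \in Des u by rewrite (mem_Des_ord u c'E).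
  by move=> /andP[_]; rewrite -c'E => /LRM_ltr_min.
by apply/val_inj; have := agree k lt_ki; rewrite !nth_oneline permM => -[].
Qed.
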